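(* Let $S$ be a finite set of more than $6$ points in the plane in general position with distinct $x$-coordinates. Let $L$, $R$, $T$ be respectively the leftmost, rightmost and topmost points of $S$. Let $p\in S$, and let $r\in S\setminus\{p\}$ (the clockwise neighbor of $p$) be the point minimizing the clockwise angle from the upward vertical ray at $p$ to the ray $\overrightarrow{pr}$, and $q\in S\setminus\{p\}$ (the counterclockwise neighbor of $p$) the point minimizing the counterclockwise angle from the upward vertical ray at $p$ to the ray $\overrightarrow{pq}$. If either of the point sequences $[L,q,p,r,T,R]$ or $[T,q,p,r,R,L]$ is a convex chain, then $p$ is a vertex of the upper hull of $S$.
   Context: A sequence of points is a convex chain if every three consecutive points of the sequence make a right (clockwise) turn. The upper hull of $S$ is the part of the boundary of the convex hull of $S$ lying on or above the segment from the leftmost to the rightmost point. *)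

From Stdlib Require Import Reals Lra List.
Open Scope R_scope.

Definition point := (R * R)%type.
Definition px (a : point) : R := fst a.
Definition py (a : point) : R := snd a.

(* Orientation determinant: > 0 left (counterclockwise) turn, < 0 right
   (clockwise) turn, = 0 collinear. *)
Definition orient (a b c : point) : R :=
  (px b - px a) * (py c - py a) - (py b - py a) * (px c - px a).

Definition right_turn (a b c : point) : Prop := orient a b c < 0.

Fixpoint convex_chain (l : list point) : Prop :=
  match l with
  | a :: ((b :: c :: _) as t) => right_turn a b c /\ convex_chain t
  | _ => True
  end.

Definition general_position (S : list point) : Prop :=
  forall a b c, In a S -> In b S -> In c S ->
    a <> b -> b <> c -> a <> c -> orient a b c <> 0.

Definition distinct_x (S : list point) : Prop :=
  forall a b, In a S -> In b S -> a <> b -> px a <> px b.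

(* Angles measured from the upward vertical direction (0,1), in [0, 2*PI),
   of the nonzero vector v = (a,b). acos (b/|v|) is the unsigned angle
   between v and (0,1). Clockwise from up passes through (1,0). *)
Definition vnorm (a b : R) : R := sqrt (a * a + b * b).

Definition cw_angle (a b : R) : R :=
  if Rle_dec 0 a then acos (b / vnorm a b) else 2 * PI - acos (b / vnorm a b).

Definition ccw_angle (a b : R) : R :=
  if Rle_dec a 0 then acos (b / vnorm a b) else 2 * PI - acos (b / vnorm a b).

Definition cw_angle_at (p r : point) : R := cw_angle (px r - px p) (py r - py p).
Definition ccw_angle_at (p q : point) : R := ccw_angle (px q - px p) (py q - py p).

Definition convex_comb (ws : list (R * point)) (p : point) : Prop :=
  (forall w x, In (w, x) ws -> 0 <= w) /\
  fold_right (fun wx acc => fst wx + acc) 0 ws = 1 /\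
  fold_right (fun wx acc => fst wx * px (snd wx) + acc) 0 ws = px p /\
  fold_right (fun wx acc => fst wx * py (snd wx) + acc) 0 ws = py p.

Definition hull_vertex (S : list point) (p : point) : Prop :=
  In p S /\
  ~ exists ws : list (R * point),
      (forall w x, In (w, x) ws -> In x S /\ x <> p) /\ convex_comb ws p.

(* Vertex of the upper hull: a hull vertex lying on or above the segment
   from the leftmost point L to the rightmost point R. *)
Definition upper_hull_vertex (S : list point) (L Rt p : point) : Prop :=
  hull_vertex S p /\ orient L Rt p >= 0.

(** Let [u = q - p] and [v = r - p].  The right turn [q, p, r] says that the
    clockwise sweep from [v] round to [u] is less than a half turn.  Since
    [r] and [q] are the first points of [S] met when sweeping clockwise resp.
    counterclockwise from the upward direction at [p], every other point of
    [S] lies in that sweep, hence strictly on one side of a line through [p]: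
    [p] is a hull vertex.  Moreover [q] lies strictly left of [p] or [r]
    strictly right of [p].  In the first case [L] and [Rt], which lie on
    either side of the vertical through [p], both lie weakly left of the ray
    from [p] through [q], which puts [p] on or above the segment [L Rt]; the
    second case is symmetric, with the ray through [r]. *)

From Stdlib Require Import Reals List Lra Psatz.
Open Scope R_scope.

Definition vec (p s : point) : point := (px s - px p, py s - py p).
Definition cross (u v : point) : R := px u * py v - py u * px v.
Definition dot (u v : point) : R := px u * px v + py u * py v.
Definition mirror (u : point) : point := (- px u, py u).

Definition point_eq_dec (a b : point) : {a = b} + {a <> b}.
Proof. decide equality; apply Req_EM_T. Defined.

Lemma vec_neq0 p s : s <> p -> vec p s <> (0, 0).
Proof.
  destruct s as [s1 s2], p as [p1 p2]; unfold vec, px, py; simpl.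
  intros Hsp E; injection E; intros; apply Hsp; f_equal; lra.
Qed.

Lemma mirror_neq0 u : u <> (0, 0) -> mirror u <> (0, 0).
Proof.
  destruct u as [a b]; unfold mirror, px, py; simpl.
  intros Hu E; injection E; intros; apply Hu; f_equal; lra.
Qed.

Lemma mirrorK u : mirror (mirror u) = u.
Proof. destruct u as [a b]; unfold mirror, px, py; simpl; now rewrite Ropp_involutive. Qed.

Lemma cross_mirror u v : cross (mirror u) (mirror v) = - cross u v.
Proof. unfold cross, mirror, px, py; simpl; ring. Qed.

Lemma cross_pos_of_right_turn a b c : right_turn a b c -> 0 < cross (vec b a) (vec b c).
Proof. unfold right_turn, orient, cross, vec, px, py; simpl; lra. Qed.

(** Directions whose clockwise angle from the upward direction lies in
    [[0, PI)] resp. [[PI, 2 PI)]. *)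
Definition right_half (u : point) : Prop := 0 < px u \/ (px u = 0 /\ 0 < py u).
Definition left_half (u : point) : Prop := px u < 0 \/ (px u = 0 /\ py u < 0).

(** [u] is met no later than [v] when sweeping clockwise from upward. *)
Definition cw_before (u v : point) : Prop :=
  (right_half u /\ left_half v) \/
  (right_half u /\ right_half v /\ cross u v <= 0) \/
  (left_half u /\ left_half v /\ cross u v <= 0).

Lemma right_or_left_half u : u <> (0, 0) -> right_half u \/ left_half u.
Proof.
  destruct u as [a b]; unfold right_half, left_half, px, py; simpl; intros Hu.
  destruct (Rtotal_order a 0) as [|[->|]]; auto.
  destruct (Rtotal_order b 0) as [|[->|]]; auto.
  now contradiction Hu.
Qed.

Definition vlen (u : point) : R := vnorm (px u) (py u).

Lemma vlen_sqr u : vlen u * vlen u = px u * px u + py u * py u.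
Proof. apply sqrt_sqrt; nra. Qed.

Lemma vlen_pos u : u <> (0, 0) -> 0 < vlen u.
Proof.
  intros Hu; apply sqrt_lt_R0.
  destruct u as [a b]; unfold px, py; simpl.
  destruct (Req_dec a 0) as [->|]; [destruct (Req_dec b 0) as [->|]|]; [easy|nra|nra].
Qed.

Lemma vlen_mirror u : vlen (mirror u) = vlen u.
Proof. unfold vlen, vnorm, mirror, px, py; simpl; f_equal; ring. Qed.

Definition cos_up (u : point) : R := py u / vlen u.

Lemma cos_up_sqr u : u <> (0, 0) ->
  (px u / vlen u) * (px u / vlen u) + cos_up u * cos_up u = 1.
Proof.
  intros Hu; pose proof (vlen_pos u Hu); pose proof (vlen_sqr u); unfold cos_up.
  transitivity ((px u * px u + py u * py u) / (vlen u * vlen u)); [field; lra|].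
  rewrite <- vlen_sqr; field; lra.
Qed.

Lemma cos_up_bound u : u <> (0, 0) -> -1 <= cos_up u <= 1.
Proof. intros Hu; pose proof (cos_up_sqr u Hu); split; nra. Qed.

Lemma cos_up_vertical b : b <> 0 -> cos_up (0, b) = b / Rabs b.
Proof.
  intros Hb; unfold cos_up, vlen, vnorm, px, py; simpl.
  replace (0 * 0 + b * b) with (Rsqr b) by (unfold Rsqr; ring).
  now rewrite sqrt_Rsqr_abs.
Qed.

Lemma acos_m1 : acos (-1) = PI.
Proof. replace (-1) with (- (1)) by ring; rewrite acos_opp, acos_1; lra. Qed.

Lemma acos_le_inv c1 c2 : -1 <= c1 <= 1 -> -1 <= c2 <= 1 ->
  acos c1 <= acos c2 -> c2 <= c1.
Proof.
  intros B1 B2 H; rewrite <- (cos_acos c1), <- (cos_acos c2) by assumption.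
  pose proof (acos_bound c1); pose proof (acos_bound c2).
  apply cos_decr_1; lra.
Qed.

Lemma cw_angle_right u : right_half u -> cw_angle (px u) (py u) = acos (cos_up u).
Proof. intros H; unfold cw_angle; destruct (Rle_dec 0 (px u)); [easy|destruct H; lra]. Qed.

(** The vertical downward direction falls in the first branch of [cw_angle],
    where both formulas give [PI]. *)
Lemma cw_angle_left u : left_half u -> cw_angle (px u) (py u) = 2 * PI - acos (cos_up u).
Proof.
  intros H; unfold cw_angle; destruct (Rle_dec 0 (px u)); [|easy].
  destruct u as [a b]; destruct H as [H|[Ha Hb]]; unfold px, py in *; simpl in *; [lra|].
  subst a; change (acos (cos_up (0, b)) = 2 * PI - acos (cos_up (0, b))).
  rewrite cos_up_vertical, Rabs_left by lra.
  replace (b / - b) with (-1) by (field; lra).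
  rewrite acos_m1; lra.
Qed.

Lemma cw_angle_right_lt_PI u : right_half u -> cw_angle (px u) (py u) < PI.
Proof.
  intros H; rewrite cw_angle_right by exact H.
  destruct u as [a b]; destruct H as [H|[Ha Hb]]; unfold px, py in *; simpl in *.
  - assert (Hu : (a, b) <> (0, 0)) by (intros E; injection E; lra).
    pose proof (cos_up_sqr _ Hu) as Hsq; pose proof (vlen_pos _ Hu); simpl in Hsq.
    assert (0 < a / vlen (a, b)) by (apply Rdiv_lt_0_compat; assumption).
    assert (Hc : -1 < cos_up (a, b) < 1) by (split; nra).
    pose proof (acos_bound_lt _ Hc); lra.
  - subst a; rewrite cos_up_vertical, Rabs_right, Rdiv_diag, acos_1 by lra.
    exact PI_RGT_0.
Qed.

Lemma PI_le_cw_angle_left u : left_half u -> PI <= cw_angle (px u) (py u).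
Proof.
  intros H; rewrite cw_angle_left by exact H.
  pose proof (acos_bound (cos_up u)); lra.
Qed.

Lemma cross_nonpos_of_cos_up_le u v : u <> (0, 0) -> v <> (0, 0) ->
  0 <= px u -> 0 <= px v -> cos_up v <= cos_up u -> cross u v <= 0.
Proof.
  intros Hu Hv Hxu Hxv Hc.
  pose proof (vlen_pos u Hu); pose proof (vlen_pos v Hv).
  pose proof (cos_up_sqr u Hu) as Uu; pose proof (cos_up_sqr v Hv) as Uv.
  set (su := px u / vlen u) in Uu; set (sv := px v / vlen v) in Uv.
  set (cu := cos_up u) in *; set (cv := cos_up v) in *.
  assert (0 <= su) by (apply Rle_mult_inv_pos; assumption).
  assert (0 <= sv) by (apply Rle_mult_inv_pos; assumption).
  (* on the right unit half-circle the sine decreases as the cosine increases *)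
  assert (Hunit : su * cv <= cu * sv).
  { destruct (Rle_dec 0 cv); destruct (Rle_dec 0 cu); try lra.
    - assert (su <= sv) by nra; nra.
    - nra.
    - assert (sv <= su) by nra; nra. }
  replace (cross u v) with (vlen u * vlen v * (su * cv - cu * sv)).
  - assert (0 < vlen u * vlen v) by nra; nra.
  - unfold cross, su, sv, cu, cv, cos_up; field; lra.
Qed.

Lemma cross_anti u v : cross v u = - cross u v.
Proof. unfold cross; ring. Qed.

Lemma cos_up_mirror u : cos_up (mirror u) = cos_up u.
Proof. unfold cos_up; now rewrite vlen_mirror. Qed.

Lemma ccw_angle_mirror u : ccw_angle (px u) (py u) = cw_angle (px (mirror u)) (py (mirror u)).
Proof.
  unfold ccw_angle, cw_angle; simpl.
  replace (vnorm (- px u) (py u)) with (vnorm (px u) (py u)) by exact (eq_sym (vlen_mirror u)).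
  destruct (Rle_dec (px u) 0); destruct (Rle_dec 0 (- px u)); auto; lra.
Qed.

Lemma cw_before_of_cw_angle_le u v : u <> (0, 0) -> v <> (0, 0) ->
  cw_angle (px u) (py u) <= cw_angle (px v) (py v) -> cw_before u v.
Proof.
  intros Hu Hv H; unfold cw_before.
  pose proof (cos_up_bound u Hu); pose proof (cos_up_bound v Hv).
  destruct (right_or_left_half u Hu) as [Ru|Lu];
  destruct (right_or_left_half v Hv) as [Rv|Lv]; auto.
  - right; left; repeat split; auto.
    rewrite !cw_angle_right in H by assumption.
    apply cross_nonpos_of_cos_up_le; auto; [destruct Ru|destruct Rv|apply acos_le_inv]; auto; lra.
  - pose proof (PI_le_cw_angle_left u Lu); pose proof (cw_angle_right_lt_PI v Rv); lra.
  - right; right; repeat split; auto.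
    rewrite !cw_angle_left in H by assumption.
    replace (cross u v) with (cross (mirror v) (mirror u))
      by (rewrite cross_mirror, cross_anti; ring).
    apply cross_nonpos_of_cos_up_le; try (apply mirror_neq0; assumption).
    + destruct Lv; simpl; lra.
    + destruct Lu; simpl; lra.
    + rewrite !cos_up_mirror; apply acos_le_inv; auto; lra.
Qed.

Lemma cross_nonpos_of_first_cw u v x : 0 < cross u v ->
  cw_before v x -> cw_before (mirror u) (mirror x) -> cross v x <= 0.
Proof.
  destruct u as [u1 u2], v as [v1 v2], x as [x1 x2].
  unfold cw_before, right_half, left_half, cross, mirror, px, py; simpl.
  intros Huv Hv Hu.
  destruct (Rle_dec (v1 * x2 - v2 * x1) 0) as [|Hvx]; [assumption|exfalso].
  intuition (subst; nra).
Qed.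

Lemma cross_nonneg_of_first_ccw u v x : 0 < cross u v ->
  cw_before v x -> cw_before (mirror u) (mirror x) -> 0 <= cross u x.
Proof.
  intros Huv Hv Hu.
  assert (H : cross (mirror u) (mirror x) <= 0).
  { apply (cross_nonpos_of_first_cw (mirror v)); rewrite ?mirrorK; try assumption.
    rewrite cross_mirror, cross_anti; lra. }
  rewrite cross_mirror in H; lra.
Qed.

Lemma first_ccw_left_or_first_cw_right u v : 0 < cross u v ->
  cw_before v u -> cw_before (mirror u) (mirror v) -> px u < 0 \/ 0 < px v.
Proof.
  destruct u as [u1 u2], v as [v1 v2].
  unfold cw_before, right_half, left_half, cross, mirror, px, py; simpl.
  intros Huv Hv Hu.
  destruct (Rlt_dec u1 0); auto; destruct (Rlt_dec 0 v1); auto; exfalso.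
  intuition (subst; nra).
Qed.

Definition wsum (f : point -> R) (ws : list (R * point)) : R :=
  fold_right (fun wx acc => fst wx * f (snd wx) + acc) 0 ws.

Lemma wsum_affine A B (p : point) ws :
  wsum (fun x => A * (px x - px p) + B * (py x - py p)) ws =
  A * (wsum px ws - px p * fold_right (fun wx acc => fst wx + acc) 0 ws) +
  B * (wsum py ws - py p * fold_right (fun wx acc => fst wx + acc) 0 ws).
Proof. unfold wsum; induction ws as [|[w x] ws IH]; simpl; [ring|]; rewrite IH; ring. Qed.

Lemma wsum_pos f ws : (forall w x, In (w, x) ws -> 0 <= w /\ 0 < f x) ->
  0 < fold_right (fun wx acc => fst wx + acc) 0 ws -> 0 < wsum f ws.
Proof.
  intros H; enough (0 <= wsum f ws /\
    (0 < fold_right (fun wx acc => fst wx + acc) 0 ws -> 0 < wsum f ws)) by tauto.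
  induction ws as [|[w x] ws IH]; simpl; [lra|].
  destruct (H w x (or_introl eq_refl)) as [Hw Hf].
  destruct IH as [IH0 IH1]; [intros; apply H; now right|].
  unfold wsum in *; split; [nra|]; intros Hs.
  destruct (Req_dec w 0) as [->|]; [specialize (IH1 ltac:(lra))|]; nra.
Qed.

Lemma hull_vertex_of_separating S p (n : point) : In p S ->
  (forall s, In s S -> s <> p -> 0 < dot n (vec p s)) -> hull_vertex S p.
Proof.
  intros Hp Hsep; split; [exact Hp|]; intros [ws [Hws [W0 [W1 [Wx Wy]]]]].
  assert (Hpos : 0 < wsum (fun x => px n * (px x - px p) + py n * (py x - py p)) ws).
  { apply wsum_pos; [|lra].
    intros w x Hin; destruct (Hws w x Hin); split; [exact (W0 w x Hin)|].
    now apply Hsep. }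
  rewrite wsum_affine in Hpos; unfold wsum in Hpos; rewrite W1, Wx, Wy in Hpos; lra.
Qed.

Lemma cross_nonneg_of_straddle a b u : px a < 0 -> 0 < px b -> px u < 0 ->
  0 <= cross u a -> 0 <= cross u b -> 0 <= cross a b.
Proof.
  intros Ha Hb Hu Hua Hub.
  assert (E : px b * cross u a - px a * cross u b = - px u * cross a b)
    by (unfold cross; ring).
  nra.
Qed.

Section FirstNeighbours.

Variables (S : list point) (p q r : point).
Hypotheses (GP : general_position S) (Hp : In p S)
  (Hq : In q S) (Hqp : q <> p) (Hr : In r S) (Hrp : r <> p).
Hypothesis turn : 0 < cross (vec p q) (vec p r).
Hypothesis r_first_cw : forall s, In s S -> s <> p -> cw_before (vec p r) (vec p s).
Hypothesis q_first_ccw : forall s, In s S -> s <> p ->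
  cw_before (mirror (vec p q)) (mirror (vec p s)).

Lemma cross_first_cw_nonpos s : In s S -> s <> p -> cross (vec p r) (vec p s) <= 0.
Proof.
  intros Hs Hsp; exact (cross_nonpos_of_first_cw _ _ _ turn
    (r_first_cw s Hs Hsp) (q_first_ccw s Hs Hsp)).
Qed.

Lemma cross_first_ccw_nonneg s : In s S -> s <> p -> 0 <= cross (vec p q) (vec p s).
Proof.
  intros Hs Hsp; exact (cross_nonneg_of_first_ccw _ _ _ turn
    (r_first_cw s Hs Hsp) (q_first_ccw s Hs Hsp)).
Qed.

Lemma dot_normal_pos s : In s S -> s <> p ->
  0 < dot (py (vec p r) - py (vec p q), px (vec p q) - px (vec p r)) (vec p s).
Proof.
  intros Hs Hsp.
  pose proof (cross_first_cw_nonpos s Hs Hsp); pose proof (cross_first_ccw_nonneg s Hs Hsp).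
  assert (E : dot (py (vec p r) - py (vec p q), px (vec p q) - px (vec p r)) (vec p s)
              = cross (vec p q) (vec p s) - cross (vec p r) (vec p s))
    by (unfold dot, cross, px, py; simpl; ring).
  rewrite E.
  destruct (Req_dec (cross (vec p q) (vec p s)) 0) as [Hqs|]; [|lra].
  (* general position leaves [q] as the only point on the line [p q] *)
  destruct (point_eq_dec s q) as [->|Hsq].
  - rewrite cross_anti in *; lra.
  - exfalso; apply (GP p q s Hp Hq Hs); auto.
Qed.

Lemma hull_vertex_first_neighbours : hull_vertex S p.
Proof. exact (hull_vertex_of_separating S p _ Hp dot_normal_pos). Qed.

Variables (L Rt : point).
Hypotheses (DX : distinct_x S)
  (HL : In L S) (L_left : forall s, In s S -> px L <= px s)
  (HRt : In Rt S) (Rt_right : forall s, In s S -> px s <= px Rt).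

Lemma orient_extremes_first_neighbours : orient L Rt p >= 0.
Proof.
  destruct (point_eq_dec L p) as [->|HLp]; [unfold orient; lra|].
  destruct (point_eq_dec Rt p) as [->|HRp]; [unfold orient; lra|].
  assert (HaL : px (vec p L) < 0).
  { pose proof (L_left p Hp); pose proof (DX L p HL Hp HLp); simpl; lra. }
  assert (HbR : 0 < px (vec p Rt)).
  { pose proof (Rt_right p Hp); pose proof (DX Rt p HRt Hp HRp); simpl; lra. }
  assert (E : orient L Rt p = cross (vec p L) (vec p Rt))
    by (unfold orient, cross, vec, px, py; simpl; ring).
  rewrite E; apply Rle_ge.
  destruct (first_ccw_left_or_first_cw_right _ _ turn (r_first_cw q Hq Hqp) (q_first_ccw r Hr Hrp)).
  - apply (cross_nonneg_of_straddle _ _ (vec p q)); auto using cross_first_ccw_nonneg.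
  - pose proof (cross_first_cw_nonpos L HL HLp); pose proof (cross_first_cw_nonpos Rt HRt HRp).
    apply (cross_nonneg_of_straddle _ _ (- px (vec p r), - py (vec p r))); auto;
      unfold cross in *; simpl in *; lra.
Qed.

End FirstNeighbours.

Theorem lemma2 (S : list point) (L Rt T p q r : point) :
  NoDup S -> (length S > 6)%nat ->
  general_position S -> distinct_x S ->
  In L S -> (forall s, In s S -> px L <= px s) ->
  In Rt S -> (forall s, In s S -> px s <= px Rt) ->
  In T S -> (forall s, In s S -> py s <= py T) ->
  In p S ->
  In r S -> r <> p -> (forall s, In s S -> s <> p -> cw_angle_at p r <= cw_angle_at p s) ->
  In q S -> q <> p -> (forall s, In s S -> s <> p -> ccw_angle_at p q <= ccw_angle_at p s) ->
  (convex_chain (L :: q :: p :: r :: T :: Rt :: nil) \/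
   convex_chain (T :: q :: p :: r :: Rt :: L :: nil)) ->
  upper_hull_vertex S L Rt p.
Proof.
  intros _ _ GP DX HL L_left HRt Rt_right _ _ Hp Hr Hrp r_min Hq Hqp q_min chain.
  assert (turn : 0 < cross (vec p q) (vec p r)).
  { apply cross_pos_of_right_turn.
    destruct chain as [[_ [H _]]|[_ [H _]]]; exact H. }
  assert (r_first : forall s, In s S -> s <> p -> cw_before (vec p r) (vec p s)).
  { intros s Hs Hsp; apply cw_before_of_cw_angle_le; try apply vec_neq0; auto.
    exact (r_min s Hs Hsp). }
  assert (q_first : forall s, In s S -> s <> p ->
            cw_before (mirror (vec p q)) (mirror (vec p s))).
  { intros s Hs Hsp; apply cw_before_of_cw_angle_le; try (apply mirror_neq0, vec_neq0; auto).
    rewrite <- !ccw_angle_mirror; exact (q_min s Hs Hsp). }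
  split.
  - exact (hull_vertex_first_neighbours S p q r GP Hp Hq Hqp turn r_first q_first).
  - exact (orient_extremes_first_neighbours S p q r Hp Hq Hqp Hr Hrp turn r_first q_first
             L Rt DX HL L_left HRt Rt_right).
Qed.
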